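(* Let $G$ be a cycle, $H=(T,L)$ a demand digraph, fix a partition of the population and an assignment of cost functions, and let $\sigma$ and $\hat\sigma$ be two equilibria. Let $\ell\in L$ and $i\in I_\ell$ with $\delta(i)\neq 0$. Then exactly one of the following holds: (1) there is $J\subseteq L$ with $\ell\in J$, $A_J\neq\emptyset$, and $\delta(i)\Delta_J<0$; (2) for all $J\subseteq L$ with $\ell\in J$ and $A_J\neq\emptyset$, $\Delta_J=0$.
   Context: Model: supply graph $G=(V,E)$ (here a cycle) with directed version having arc set $A$; simple demand digraph $H=(T,L)$, $T\subseteq V$, whose arcs are OD-pairs; population $I$ a bounded interval with Lebesgue measure $\lambda$, partitioned into measurable $I_\ell$, $\ell\in L$; routes are directed paths in the directed version of $G$ between the endpoints of an OD-pair; strategy profiles are measurable maps assigning to each $i\in I_\ell$ an $\ell$-route; flow $f_a=\lambda\{i:a\in\sigma(i)\}$; each user $i$ has nonnegative continuous strictly increasing costs $c_a^i$ (measurable in $i$), route cost $\sum_{a\in r}c^i_a(f_a)$; an equilibrium is a strategy profile in which every user uses a minimal-cost route for his OD-pair. Fixing an orientation of the cycle, arcs are positive or negative, each $\ell\in L$ has a unique positive route $r_\ell^+$ and unique negative route $r_\ell^-$; for a user $i\in I_\ell$ write $r_i^\pm=r_\ell^\pm$. For $J\subseteq L$, $A_J^+$ is the set of positive arcs lying in $r_\ell^+$ for exactly the $\ell\in J$ (and in no $r_\ell^+$ with $\ell\notin J$), $A_J^-$ analogously for negative arcs, $A_J=A_J^+\cup A_J^-$. For a strategy profile $\sigma$ and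 $J\subseteq L$, $f_J^{+}=\lambda\{i\in\bigcup_{\ell\in J}I_\ell:\sigma(i)=r_i^+\}$, $f_J^-=\lambda\{i\in\bigcup_{\ell\in J}I_\ell:\sigma(i)=r_i^-\}$, and hatted quantities refer to $\hat\sigma$. Define $\Delta_J=f_J^+-\hat f_J^+=\hat f_J^--f_J^-$ and $\delta(i)=\mathbf 1[\sigma(i)=r_i^+]-\mathbf 1[\hat\sigma(i)=r_i^+]$. *)

From mathcomp Require Import all_boot.
From Stdlib Require Import Reals ClassicalEpsilon.

Set Implicit Arguments.
Unset Strict Implicit.
Unset Printing Implicit Defensive.

Definition cover_sum (A : R -> Prop) (s : R) : Prop :=
  exists a b : nat -> R,
    (forall k, (a k <= b k)%R) /\
    (forall x, A x -> exists k, (a k < x < b k)%R) /\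
    infinite_sum (fun k => (b k - a k)%R) s.

Definition is_outer_measure (A : R -> Prop) (m : R) : Prop :=
  (forall s, cover_sum A s -> (m <= s)%R) /\
  (forall m', (forall s, cover_sum A s -> (m' <= s)%R) -> (m' <= m)%R).

(* Caratheodory criterion (tested on sets of finite outer measure, which is
   equivalent to the usual one since infinite case holds by subadditivity). *)
Definition leb_measurable (E : R -> Prop) : Prop :=
  forall A m, is_outer_measure A m ->
    exists m1 m2, is_outer_measure (fun x => A x /\ E x) m1 /\
                  is_outer_measure (fun x => A x /\ ~ E x) m2 /\
                  m = (m1 + m2)%R.

Definition lam (E : R -> Prop) : R :=
  epsilon (inhabits 0%R) (is_outer_measure E).

Definition bounded_interval (I : R -> Prop) : Prop :=
  (forall x y z, I x -> I z -> (x <= y <= z)%R -> I y) /\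
  (exists M, forall x, I x -> (Rabs x <= M)%R).

(* ---------- The cycle G on vertices 'I_n ----------
   Edge k joins k and k+1 (mod n).  Directed version: arc (k, true) is the
   positive arc k -> k+1, arc (k, false) is the negative arc k+1 -> k.  The route choice b = true is the
   unique positive route r^+ from s to t (s -> s+1 -> ... -> t), b = false the
   unique negative route r^- (s -> s-1 -> ... -> t). *)

Definition carc (n : nat) := ('I_n * bool)%type.

Definition on_route (n : nat) (l : 'I_n * 'I_n) (b : bool) (a : carc n) : bool :=
  (a.2 == b) &&
  (if b then ((a.1 + n - l.1) %% n < (l.2 + n - l.1) %% n)
        else ((a.1 + n - l.2) %% n < (l.1 + n - l.2) %% n)).

Definition route_cost (n : nat) (c : R -> carc n -> R -> R) (f : carc n -> R)
  (i : R) (l : 'I_n * 'I_n) (b : bool) : R :=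
  \big[Rplus/0%R]_(a : carc n | on_route l b a) c i a (f a).

(* users i are in I, user i belongs to I_{od i}; sigma i = true iff i uses r^+ *)
Definition flow (n : nat) (I : R -> Prop) (od : R -> 'I_n * 'I_n)
  (sigma : R -> bool) (a : carc n) : R :=
  lam (fun i => I i /\ on_route (od i) (sigma i) a).

Definition strategy_measurable (n : nat) (I : R -> Prop)
  (od : R -> 'I_n * 'I_n) (sigma : R -> bool) : Prop :=
  forall l b, leb_measurable (fun i => I i /\ od i = l /\ sigma i = b).

Definition admissible_costs (n : nat) (I : R -> Prop)
  (c : R -> carc n -> R -> R) : Prop :=
  (forall i, I i -> forall a,
     (forall x, (0 <= x)%R -> (0 <= c i a x)%R) /\
     (forall x y, (0 <= x)%R -> (x < y)%R -> (c i a x < c i a y)%R) /\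
     (forall x, (0 <= x)%R ->
        limit1_in (c i a) (fun y => (0 <= y)%R) (c i a x) x)) /\
  (forall a x y, leb_measurable (fun i => I i /\ (c i a x < y)%R)).

Definition equilibrium (n : nat) (I : R -> Prop) (od : R -> 'I_n * 'I_n)
  (c : R -> carc n -> R -> R) (sigma : R -> bool) : Prop :=
  forall i, I i -> forall b,
    (route_cost c (flow I od sigma) i (od i) (sigma i)
     <= route_cost c (flow I od sigma) i (od i) b)%R.

Definition fJ (n : nat) (I : R -> Prop) (od : R -> 'I_n * 'I_n)
  (sigma : R -> bool) (J : {set 'I_n * 'I_n}) (b : bool) : R :=
  lam (fun i => I i /\ od i \in J /\ sigma i = b).

Definition DeltaJ (n : nat) (I : R -> Prop) (od : R -> 'I_n * 'I_n)
  (sigma sigmah : R -> bool) (J : {set 'I_n * 'I_n}) : R :=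
  (fJ I od sigma J true - fJ I od sigmah J true)%R.

Definition delta (sigma sigmah : R -> bool) (i : R) : R :=
  ((if sigma i then 1 else 0) - (if sigmah i then 1 else 0))%R.

(* A_J <> empty: some arc a (of sign a.2) lies on the route of sign a.2 of
   exactly the OD-pairs l in J (among those of L). *)
Definition AJ_nonempty (n : nat) (L J : {set 'I_n * 'I_n}) : Prop :=
  exists a : carc n, [set l in L | on_route l a.2 a] = J.

From HB Require Import structures.
From mathcomp Require Import all_boot.
From Stdlib Require Import Reals ClassicalEpsilon Lra.
From Stdlib Require Import FunctionalExtensionality PropExtensionality Classical.

(* Let b = sigma(i); since delta(i) <> 0 user i takes route b under sigma
   and route ~~ b under sigmah.  The proof has three ingredients.
   1. Measure: lam is the outer measure of bounded sets, and it is additive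
      across Lebesgue measurable sets.  Hence f_J^+ + f_J^- is the total
      demand of J, the same for every strategy profile, so that the shift
      f_J^b - hat f_J^b changes sign with b, and delta(i) Delta_J is the
      shift of J in the direction b.
   2. Geometry of the cycle: the flow on an arc a is f_J^{sign a} for the
      class J = A-class of a, i.e. the OD-pairs whose route of sign a uses a.
   3. Costs: if no class containing l shifts against i, then flows grow on
      route b and shrink on route ~~ b; the two equilibrium inequalities of
      user i then force equal route costs, and strict monotonicity of the
      costs forces equal flows on every arc of both routes.  Every class J
      with l in J and A_J nonempty is the class of such an arc, so Delta_J = 0.
   Alternatives (1) and (2) are incompatible since Delta_J = 0 kills the
   product in (1); classical logic concludes. *)

Set Implicit Arguments.
Unset Strict Implicit.
Unset Printing Implicit Defensive.
Local Open Scope R_scope.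

HB.instance Definition _ := Monoid.isComLaw.Build R 0 Rplus
  (fun x y z => esym (Rplus_assoc x y z)) Rplus_comm Rplus_0_l.

Lemma big_Rplus_le (T : finType) (P : pred T) (x y : T -> R) :
  (forall a, P a -> x a <= y a) ->
  \big[Rplus/0]_(a | P a) x a <= \big[Rplus/0]_(a | P a) y a.
Proof. by move=> le_xy; apply: (big_ind2 (fun u v => u <= v)) => //; [lra | move=> *; lra]. Qed.

Lemma big_Rplus_le_eq (T : finType) (P : pred T) (x y : T -> R) :
  (forall a, P a -> x a <= y a) ->
  \big[Rplus/0]_(a | P a) x a = \big[Rplus/0]_(a | P a) y a ->
  forall a, P a -> x a = y a.
Proof.
move=> le_xy + a Pa; rewrite (bigD1 a Pa) [in RHS](bigD1 a Pa) /=.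
have : \big[Rplus/0]_(a' | P a' && (a' != a)) x a'
       <= \big[Rplus/0]_(a' | P a' && (a' != a)) y a'.
  by apply: big_Rplus_le => a' /andP [Pa' _]; apply: le_xy.
have := le_xy a Pa; lra.
Qed.

Lemma infinite_sum_ge0 (f : nat -> R) s :
  (forall k, 0 <= f k) -> infinite_sum f s -> 0 <= s.
Proof.
by move=> f_ge0 fs; apply: Rle_trans (cond_pos_sum f 0 f_ge0) (sum_incr f 0 s fs f_ge0).
Qed.

Lemma infinite_sum_first (f : nat -> R) :
  (forall k, f k.+1 = 0) -> infinite_sum f (f 0%nat).
Proof.
move=> f_tail eps eps_gt0; exists 0%nat => m _.
have -> : sum_f_R0 f m = f 0%nat by elim: m => [|m IH] //=; rewrite IH f_tail; lra.
rewrite /Rdist Rminus_diag Rabs_R0; lra.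
Qed.

Lemma cover_sum_ge0 A s : cover_sum A s -> 0 <= s.
Proof.
case=> a [b [le_ab [_ sum_ab]]]; apply: (infinite_sum_ge0 _ sum_ab) => k.
by have := le_ab k; lra.
Qed.

(* Bounded sets fit in one interval, so their outer measure is finite. *)
Definition bounded_set (A : R -> Prop) : Prop :=
  exists M, forall x, A x -> Rabs x <= M.

Lemma bounded_subset A B : bounded_set B -> (forall x, A x -> B x) -> bounded_set A.
Proof. by case=> M HM AB; exists M => x /AB /HM. Qed.

Lemma outer_measure_unique A m1 m2 :
  is_outer_measure A m1 -> is_outer_measure A m2 -> m1 = m2.
Proof. by case=> lb1 glb1 [lb2 glb2]; apply: Rle_antisym; [apply: glb2 | apply: glb1]. Qed.

(* A bounded set lies in one interval, so its cover sums form a nonempty set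
   bounded below by 0; the infimum of that set is the outer measure. *)
Lemma outer_measure_exists A : bounded_set A -> exists m, is_outer_measure A m.
Proof.
case=> M HM; pose r := Rabs M + 1.
pose S y := exists s, cover_sum A s /\ y = - s.
have S_bounded : bound S by exists 0 => y [s [/cover_sum_ge0 s_ge0 ->]]; lra.
have S_inhabited : exists y, S y.
  pose a k := if k is 0%nat then - r else 0.
  pose b k := if k is 0%nat then r else 0.
  exists (- (b 0%nat - a 0%nat)), (b 0%nat - a 0%nat); split => //.
  exists a, b; split; [|split].
  - by case=> [|k] /=; rewrite /r; have := Rabs_pos M; lra.
  - move=> x Ax; exists 0%nat; rewrite /a /b /r /=.
    have := HM x Ax; have := Rle_abs M; have := Rle_abs x.
    have := Rle_abs (- x); rewrite Rabs_Ropp; lra.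
  - by apply: infinite_sum_first => k /=; lra.
have [sup [ub_sup lub_sup]] := completeness _ S_bounded S_inhabited.
exists (- sup); split.
- move=> s cs; have : S (- s) by exists s.
  by move/ub_sup; lra.
- move=> m' lb_m'; suff : sup <= - m' by lra.
  by apply: lub_sup => y [s [cs ->]]; have := lb_m' s cs; lra.
Qed.

Lemma lam_spec A : bounded_set A -> is_outer_measure A (lam A).
Proof. by move=> bA; apply: epsilon_spec; apply: outer_measure_exists. Qed.

Lemma lam_ge0 A : bounded_set A -> 0 <= lam A.
Proof. by move=> /lam_spec [_ glb]; apply: glb => s; apply: cover_sum_ge0. Qed.

Lemma lam_ext A B : (forall x, A x <-> B x) -> lam A = lam B.
Proof.
move=> AB; congr lam; apply: functional_extensionality => x.
exact: propositional_extensionality.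
Qed.

(* The empty set is covered by degenerate intervals. *)
Lemma lam_empty A : (forall x, ~ A x) -> lam A = 0.
Proof.
move=> A0; apply: (outer_measure_unique (lam_spec _)); first by exists 0 => x /A0.
split; first by move=> s; apply: cover_sum_ge0.
move=> m' lb_m'; suff : m' <= 0 - 0 by lra.
apply: lb_m'; exists (fun _ => 0), (fun _ => 0).
split; [move=> _; lra | split; first by move=> x /A0].
by apply: (infinite_sum_first (f := fun _ => 0 - 0)) => _; apply: Rminus_diag.
Qed.

Lemma lam_split A E : bounded_set A -> leb_measurable E ->
  lam A = lam (fun x => A x /\ E x) + lam (fun x => A x /\ ~ E x).
Proof.
move=> bA mE; have [m1 [m2 [m1E [m2E ->]]]] := mE _ _ (lam_spec bA).
have bAE : bounded_set (fun x => A x /\ E x) by apply: (bounded_subset bA) => x [].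
have bAnE : bounded_set (fun x => A x /\ ~ E x) by apply: (bounded_subset bA) => x [].
by rewrite (outer_measure_unique (lam_spec bAE) m1E) (outer_measure_unique (lam_spec bAnE) m2E).
Qed.

Section Demand.
Variables (n : nat) (I : R -> Prop) (od : R -> 'I_n * 'I_n) (sigma : R -> bool).
Hypotheses (bI : bounded_set I) (sigma_meas : strategy_measurable I od sigma).

Lemma lam_pairs_seq b (s : seq ('I_n * 'I_n)) : uniq s ->
  lam (fun i => I i /\ od i \in s /\ sigma i = b) =
  \big[Rplus/0]_(l <- s) lam (fun i => I i /\ od i = l /\ sigma i = b).
Proof.
elim: s => [_ | l s IH /= /andP [l_notin_s uniq_s]].
  by rewrite big_nil; apply: lam_empty => i [_ []]; rewrite in_nil.
rewrite big_cons -IH // (lam_split (E := fun i => I i /\ od i = l /\ sigma i = b));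
  [| by apply: (bounded_subset bI) => i [] | exact: sigma_meas].
congr (_ + _); apply: lam_ext => i; split.
- by case=> [[Ii [_ ib]] [_ [il _]]].
- by case=> Ii [il ib]; do !split => //; rewrite il mem_head.
- case=> [[Ii [i_in ib]] not_l]; do !split => //.
  by move: i_in; rewrite in_cons => /orP [/eqP il | //]; case: not_l.
- case=> Ii [i_in ib]; split; first by do !split => //; rewrite in_cons i_in orbT.
  by case=> _ [il _]; move: l_notin_s; rewrite -il i_in.
Qed.

Lemma fJ_pairs J b : fJ I od sigma J b =
  \big[Rplus/0]_(l <- enum J) lam (fun i => I i /\ od i = l /\ sigma i = b).
Proof. by rewrite /fJ -lam_pairs_seq ?enum_uniq //; apply: lam_ext => i; rewrite mem_enum. Qed.

Lemma fJ_demand J : fJ I od sigma J true + fJ I od sigma J false =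
  \big[Rplus/0]_(l <- enum J) lam (fun i => I i /\ od i = l).
Proof.
rewrite !fJ_pairs -big_split /=; apply: eq_bigr => l _.
rewrite [RHS](lam_split (E := fun i => I i /\ od i = l /\ sigma i = true));
  [| by apply: (bounded_subset bI) => i [] | exact: sigma_meas].
congr (_ + _); apply: lam_ext => i; split.
- by case=> Ii [il ib].
- by case=> [_ h].
- by case=> Ii [il ib]; do !split => //; case=> _ [_]; rewrite ib.
- by case=> [[Ii il] not_true]; do !split => //; case: (sigma i) not_true => // [[]].
Qed.

Lemma flow_ge0 a : 0 <= flow I od sigma a.
Proof. by apply: lam_ge0; apply: (bounded_subset bI) => i []. Qed.

End Demand.

(* Arc classes on the cycle: the OD-pairs of L whose route of the sign of a
   uses the arc a.  A_J is nonempty exactly when J is an arc class. *)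

Definition arc_class (n : nat) (L : {set 'I_n * 'I_n}) (a : carc n) :
  {set 'I_n * 'I_n} := [set l in L | on_route l a.2 a].

Lemma on_route_sign n (l : 'I_n * 'I_n) b (a : carc n) :
  on_route l b a = (a.2 == b) && on_route l a.2 a.
Proof. by rewrite /on_route; case: eqP => [-> | //]; rewrite eqxx. Qed.

Lemma arc_class_subset n (L : {set 'I_n * 'I_n}) a : arc_class L a \subset L.
Proof. by apply/subsetP => l; rewrite inE => /andP []. Qed.

Lemma arc_class_route n (L : {set 'I_n * 'I_n}) l b (a : carc n) :
  l \in L -> on_route l b a -> a.2 = b /\ l \in arc_class L a.
Proof. by move=> lL; rewrite on_route_sign => /andP [/eqP <- la]; rewrite inE lL la. Qed.

Lemma flow_arc_class n (I : R -> Prop) od (L : {set 'I_n * 'I_n}) sigma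
  (odL : forall i, I i -> od i \in L) a :
  flow I od sigma a = fJ I od sigma (arc_class L a) a.2.
Proof.
apply: lam_ext => i; rewrite inE on_route_sign; split.
- by case=> Ii /andP [/eqP ib ia]; rewrite odL.
- by case=> Ii [/andP [_ ia] ib]; rewrite ib eqxx.
Qed.

Section RouteCosts.
Variables (n : nat) (c : R -> carc n -> R -> R) (i : R).
Hypothesis c_incr : forall a x y, 0 <= x -> x < y -> c i a x < c i a y.

Lemma cost_le a x y : 0 <= x -> x <= y -> c i a x <= c i a y.
Proof. by move=> x_ge0 /Rle_lt_or_eq_dec [/(c_incr a x_ge0) /Rlt_le | ->]; [| lra]. Qed.

Lemma cost_inj a x y : 0 <= x -> 0 <= y -> c i a x = c i a y -> x = y.
Proof.
move=> x_ge0 y_ge0 cxy; case: (Rtotal_order x y) => [/(c_incr a x_ge0) | [// | /(c_incr a y_ge0)]];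
  lra.
Qed.

Variables (l : 'I_n * 'I_n) (b : bool) (f g : carc n -> R).
Hypotheses (g_ge0 : forall a, 0 <= g a) (g_le_f : forall a, on_route l b a -> g a <= f a).

Lemma route_cost_le : route_cost c g i l b <= route_cost c f i l b.
Proof. by apply: big_Rplus_le => a la; apply: cost_le => //; apply: g_le_f. Qed.

Lemma route_cost_eq_flows :
  route_cost c g i l b = route_cost c f i l b -> forall a, on_route l b a -> g a = f a.
Proof.
move=> same_cost a la; apply: (cost_inj (g_ge0 a)); first by apply: Rle_trans (g_le_f la).
apply: (big_Rplus_le_eq _ same_cost la) => a' la'.
by apply: cost_le => //; apply: g_le_f.
Qed.

End RouteCosts.

Lemma switching_user_same_flows n (c : R -> carc n -> R -> R) i l b (f fh : carc n -> R) :
  (forall a x y, 0 <= x -> x < y -> c i a x < c i a y) ->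
  (forall a, 0 <= f a) -> (forall a, 0 <= fh a) ->
  (forall a, on_route l b a -> fh a <= f a) ->
  (forall a, on_route l (~~ b) a -> f a <= fh a) ->
  route_cost c f i l b <= route_cost c f i l (~~ b) ->
  route_cost c fh i l (~~ b) <= route_cost c fh i l b ->
  forall b' a, on_route l b' a -> f a = fh a.
Proof.
move=> c_incr f_ge0 fh_ge0 grow shrink eq_f eq_fh.
have up := route_cost_le c_incr fh_ge0 grow.
have down := route_cost_le c_incr f_ge0 shrink.
have same_b : route_cost c fh i l b = route_cost c f i l b by lra.
have same_nb : route_cost c f i l (~~ b) = route_cost c fh i l (~~ b) by lra.
move=> b' a; case: (eqVneq b' b) => [-> la | /negPf nb'].
- by symmetry; apply: (route_cost_eq_flows c_incr fh_ge0 grow same_b).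
- have -> : b' = ~~ b by case: b' nb'; case: (b).
  exact: (route_cost_eq_flows c_incr f_ge0 shrink same_nb).
Qed.

Definition class_shift n (I : R -> Prop) od (sigma sigmah : R -> bool)
  (J : {set 'I_n * 'I_n}) (b : bool) : R :=
  fJ I od sigma J b - fJ I od sigmah J b.

Section TwoProfiles.
Variables (n : nat) (I : R -> Prop) (od : R -> 'I_n * 'I_n) (sigma sigmah : R -> bool).
Hypotheses (bI : bounded_set I) (sigma_meas : strategy_measurable I od sigma)
  (sigmah_meas : strategy_measurable I od sigmah).

Let shift := class_shift I od sigma sigmah.

(* Conservation of demand: a shift towards one sign is a shift away from the
   other. *)
Lemma class_shift_negb J b : shift J (~~ b) = - shift J b.
Proof.
have := fJ_demand bI sigma_meas J; rewrite -(fJ_demand bI sigmah_meas J).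
by rewrite /shift /class_shift; case: b => /=; lra.
Qed.

Lemma DeltaJ_shift J b : shift J b = 0 -> DeltaJ I od sigma sigmah J = 0.
Proof.
case: b => [// | ]; have := class_shift_negb J false; rewrite /shift /DeltaJ /=.
by rewrite /class_shift; lra.
Qed.

Lemma delta_DeltaJ i J : sigmah i = ~~ sigma i ->
  delta sigma sigmah i * DeltaJ I od sigma sigmah J = shift J (sigma i).
Proof.
move=> switch; have := class_shift_negb J true.
rewrite /delta /DeltaJ /shift /class_shift switch; case: (sigma i) => /=; lra.
Qed.

Variable L : {set 'I_n * 'I_n}.
Hypothesis odL : forall i, I i -> od i \in L.

Lemma flow_shift a :
  flow I od sigma a - flow I od sigmah a = shift (arc_class L a) a.2.
Proof. by rewrite !(flow_arc_class _ odL). Qed.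

Lemma no_adverse_shift_balanced (c : R -> carc n -> R -> R) l i :
  l \in L -> I i -> od i = l -> sigmah i = ~~ sigma i ->
  (forall a x y, 0 <= x -> x < y -> c i a x < c i a y) ->
  equilibrium I od c sigma -> equilibrium I od c sigmah ->
  (forall J : {set 'I_n * 'I_n},
     J \subset L -> l \in J -> AJ_nonempty L J -> 0 <= shift J (sigma i)) ->
  forall J : {set 'I_n * 'I_n}, J \subset L -> l \in J -> AJ_nonempty L J ->
    DeltaJ I od sigma sigmah J = 0.
Proof.
move=> lL Ii il switch c_incr eq_sigma eq_sigmah no_adverse.
set b := sigma i in switch no_adverse *.
have shift_arc b' a : on_route l b' a -> a.2 = b' /\ 0 <= shift (arc_class L a) b.
  move=> la; have [a_b' l_class] := arc_class_route lL la.
  by split; last apply: no_adverse; rewrite ?arc_class_subset //; exists a.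
have grow a : on_route l b a -> flow I od sigmah a <= flow I od sigma a.
  by move=> /shift_arc [a_b shift_ge0]; have := flow_shift a; rewrite a_b; lra.
have shrink a : on_route l (~~ b) a -> flow I od sigma a <= flow I od sigmah a.
  move=> /shift_arc [a_nb shift_ge0]; have := flow_shift a.
  by rewrite a_nb class_shift_negb; lra.
have eq_f := eq_sigma i Ii (~~ b); rewrite il -/b in eq_f.
have eq_fh := eq_sigmah i Ii b; rewrite il switch in eq_fh.
have same := switching_user_same_flows c_incr (flow_ge0 od sigma bI)
  (flow_ge0 od sigmah bI) grow shrink eq_f eq_fh.
move=> J _ lJ [a]; rewrite -/(arc_class L a) => class_a.
apply: (@DeltaJ_shift J a.2).
have la : on_route l a.2 a by move: lJ; rewrite -class_a inE => /andP [].
by have := flow_shift a; rewrite class_a (same _ _ la); lra.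
Qed.

End TwoProfiles.

Lemma delta_neq0_switch (sigma sigmah : R -> bool) i :
  delta sigma sigmah i <> 0 -> sigmah i = ~~ sigma i.
Proof. by rewrite /delta; case: (sigma i); case: (sigmah i) => //= h; case: h; lra. Qed.

Local Close Scope R_scope.
Unset Implicit Arguments.

Theorem lemma1 (n : nat) (Hn : 3 <= n)
  (L : {set 'I_n * 'I_n}) (HL : forall l, l \in L -> l.1 != l.2)
  (I : R -> Prop) (HI : bounded_interval I)
  (od : R -> 'I_n * 'I_n) (Hod : forall i, I i -> od i \in L)
  (Hpart : forall l, l \in L -> leb_measurable (fun i => I i /\ od i = l))
  (c : R -> carc n -> R -> R) (Hc : admissible_costs I c)
  (sigma sigmah : R -> bool)
  (Hsm : strategy_measurable I od sigma)
  (Hshm : strategy_measurable I od sigmah)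
  (Heq : equilibrium I od c sigma)
  (Heqh : equilibrium I od c sigmah)
  (l : 'I_n * 'I_n) (Hl : l \in L)
  (i : R) (Hi : I i) (Hil : od i = l)
  (Hd : delta sigma sigmah i <> 0%R) :
  let P1 := exists J : {set 'I_n * 'I_n},
              [/\ J \subset L, l \in J, AJ_nonempty L J &
                  (delta sigma sigmah i * DeltaJ I od sigma sigmah J < 0)%R] in
  let P2 := forall J : {set 'I_n * 'I_n},
              J \subset L -> l \in J -> AJ_nonempty L J ->
              DeltaJ I od sigma sigmah J = 0%R in
  (P1 /\ ~ P2) \/ (~ P1 /\ P2).
Proof.
move=> P1 P2.
have bI : bounded_set I by case: HI.
have switch := delta_neq0_switch Hd.
have c_incr : forall a x y, (0 <= x)%R -> (x < y)%R -> (c i a x < c i a y)%R.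
  by move=> a; have [_ [incr _]] := Hc.1 i Hi a.
have P1_notP2 : P1 -> ~ P2.
  case=> J [JL lJ AJ neg] all0; move: neg.
  by rewrite (all0 J JL lJ AJ) Rmult_0_r; apply: Rlt_irrefl.
have notP1_P2 : ~ P1 -> P2.
  move=> notP1; apply: (no_adverse_shift_balanced bI Hsm Hshm Hod Hl Hi Hil switch
    c_incr Heq Heqh) => J JL lJ AJ.
  rewrite -(delta_DeltaJ bI Hsm Hshm J switch); apply: Rnot_lt_le => neg.
  by apply: notP1; exists J.
by case: (classic P1) => [/[dup] /P1_notP2 | /[dup] /notP1_P2]; [left | right].
Qed.
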